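(* Let $X$ and $Y$ be slices that are not jointly spacelike (i.e. $X\cup Y$ is not spacelike). Then the presheaf $(X\wedge Y)(-):\mathsf{Slice}^{op}\to\mathsf{Set}$ is not representable.
   Context: Fix a connected, time-orientable Lorentzian manifold $\mathcal{M}$ with a fixed time-orientation (no further causality assumptions). A causal curve is an equivalence class, up to monotone reparametrisation, of smooth regular paths $\mu:\iota\to\mathcal{M}$ ($\iota\subseteq\mathbb{R}$ an interval) whose tangent is everywhere timelike or null; it is future-directed if the tangent is everywhere future-directed. Write $x\prec y$ if $x=y$ or there is a future-directed causal curve from $x$ to $y$. A region $A\subseteq\mathcal{M}$ is spacelike if no two distinct points $x,y\in A$ satisfy $x\prec y$. A slice is a closed spacelike subset of $\mathcal{M}$; slices $X,Y$ are jointly spacelike if $X\cup Y$ is spacelike. For regions $A,B$, $\mathcal{C}[A,B]$ is the set of future-directed causal curves passing through $A$ and then $B$: for a representative path $\mu:\iota\to\mathcal{M}$, there exists $q\in\iota$ with $\mu(q)\in B$, and for every such $q$ there exists $p\le q$ with $\mu(p)\in A$. The category $\mathsf{Slice}$ has slices as objects, $\mathsf{Slice}(X,Y)=\mathcal{P}(\mathcal{C}[X,Y])$ (the powerset), composition $T\circ S:=T\cap S$, identities $1_X=\mathcal{C}[X,X]$. For slices $X,Y$, $(X\wedge Y)(-)$ is the presheaf with $(X\wedge Y)(Z):=\mathcal{P}(\mathcal{C}[Z,X]\cap\mathcal{C}[Z,Y])$ and $(X\wedge Y)(U:Z'\to Z):C\mapsto C\cap U$. *)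

From HB Require Import structures.
From mathcomp Require Import all_boot all_order all_algebra.
From mathcomp Require Import all_classical all_reals all_analysis.
Set Implicit Arguments. Unset Strict Implicit. Unset Printing Implicit Defensive.
Import Order.TTheory GRing.Theory Num.Theory.
Import numFieldNormedType.Exports.
Local Open Scope classical_set_scope.
Local Open Scope ring_scope.

(* Smoothness (C^infinity) of a map between normed spaces on a set A:   *)
(* all iterated directional derivatives exist on A and are continuous  *)
(* at every point of A (A is meant to be open).                        *)
Section Smooth.
Context {R : realType} {V W : normedModType R}.

Fixpoint iterD (vs : seq V) (f : V -> W) : V -> W :=
  match vs with
  | [::] => f
  | v :: vs' => fun x => derive (iterD vs' f) x v
  end.

Definition smooth_on (A : set V) (f : V -> W) : Prop :=
  forall vs : seq V,
    (forall x, A x -> {for x, continuous (iterD vs f)}) /\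
    (forall v x, A x -> derivable (iterD vs f) x v).
End Smooth.

Definition bil {R : realType} {n : nat} (G : 'M[R]_n) (v w : 'rV[R]_n) : R :=
  (v *m G *m w^T) 0 0.

Definition lorentz_signature {R : realType} {n : nat} (G : 'M[R]_n) : Prop :=
  G^T = G /\
  exists (P : 'M[R]_n) (k0 : 'I_n),
    P \in unitmx /\
    P^T *m G *m P = diag_mx (\row_k (if k == k0 then -1 else 1)).

(* A time-oriented Lorentzian manifold, presented by an atlas.  Every   *)
(* chart i has domain dom i (open in M), a chart map phi i, its inverse *)
(* psi i; the metric is given in chart i by the matrix field g i and    *)
(* the fixed time orientation by a timelike continuous vector field T i.*)
Record LorentzData (R : realType) (M : topologicalType) (n : nat) := {
  chart_idx : Type;
  dom : chart_idx -> set M;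
  phi : chart_idx -> M -> 'rV[R]_n;
  psi : chart_idx -> 'rV[R]_n -> M;
  gmet : chart_idx -> 'rV[R]_n -> 'M[R]_n;
  tfield : chart_idx -> 'rV[R]_n -> 'rV[R]_n
}.
Arguments chart_idx {R M n} l.
Arguments dom {R M n} l i.
Arguments phi {R M n} l i.
Arguments psi {R M n} l i.
Arguments gmet {R M n} l i.
Arguments tfield {R M n} l i.

Section Lorentz.
Context {R : realType} {M : topologicalType} {n : nat}.
Variable L : LorentzData R M n.

Definition cimg (i : chart_idx L) : set 'rV[R]_n := phi L i @` dom L i.

Definition transition (i j : chart_idx L) : 'rV[R]_n -> 'rV[R]_n :=
  phi L j \o psi L i.

Definition is_time_oriented_lorentzian : Prop :=
  (forall i, open (dom L i)) /\
  (forall i, open (cimg i)) /\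
  (forall i x, dom L i x -> psi L i (phi L i x) = x) /\
  (forall i y, cimg i y -> dom L i (psi L i y) /\ phi L i (psi L i y) = y) /\
  (forall i, {within dom L i, continuous (phi L i)}) /\
  (forall i, {within cimg i, continuous (psi L i)}) /\
  (forall x, exists i, dom L i x) /\
  (forall i j, smooth_on (phi L i @` (dom L i `&` dom L j)) (transition i j)) /\
  (forall i, smooth_on (cimg i) (gmet L i)) /\
  (forall i y, cimg i y -> lorentz_signature (gmet L i y)) /\
  (forall i j x, dom L i x -> dom L j x -> forall v w,
     bil (gmet L i (phi L i x)) v w =
     bil (gmet L j (phi L j x))
         (derive (transition i j) (phi L i x) v)
         (derive (transition i j) (phi L i x) w)) /\
  (forall i, {within cimg i, continuous (tfield L i)}) /\
  (forall i y, cimg i y -> bil (gmet L i y) (tfield L i y) (tfield L i y) < 0) /\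
  (forall i j x, dom L i x -> dom L j x ->
     tfield L j (phi L j x) =
     derive (transition i j) (phi L i x) (tfield L i (phi L i x))).

(* Paths: a nondegenerate interval iota together with a map mu; only   *)
(* the values of mu on iota matter.  A path is smooth if mu is smooth  *)
(* on some open set O containing iota (this accounts for endpoints).   *)
Definition Path := (set R * (R -> M))%type.

Definition velocity (i : chart_idx L) (mu : R -> M) (t : R) : 'rV[R]_n :=
  derive (phi L i \o mu) t 1.

Definition smooth_path (p : Path) : Prop :=
  is_interval p.1 /\ (exists a b, p.1 a /\ p.1 b /\ a < b) /\
  exists O : set R, open O /\ p.1 `<=` O /\
    (forall t, O t -> {for t, continuous p.2}) /\
    (forall t, O t -> exists i, dom L i (p.2 t) /\
       exists N : set R, open N /\ N t /\ N `<=` O /\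
         p.2 @` N `<=` dom L i /\ smooth_on N (phi L i \o p.2)).

Definition causal_path (p : Path) : Prop :=
  smooth_path p /\
  forall t, p.1 t -> forall i, dom L i (p.2 t) ->
    velocity i p.2 t != 0 /\
    bil (gmet L i (phi L i (p.2 t))) (velocity i p.2 t) (velocity i p.2 t) <= 0.

Definition fd_path (p : Path) : Prop :=
  causal_path p /\
  forall t, p.1 t -> forall i, dom L i (p.2 t) ->
    bil (gmet L i (phi L i (p.2 t))) (velocity i p.2 t)
        (tfield L i (phi L i (p.2 t))) < 0.

Definition reparam (p q : Path) : Prop :=
  exists h : R -> R,
    (forall s, q.1 s -> p.1 (h s)) /\
    (forall t, p.1 t -> exists s, q.1 s /\ h s = t) /\
    (forall s s', q.1 s -> q.1 s' -> s < s' -> h s < h s') /\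
    (forall s, q.1 s -> q.2 s = p.2 (h s)).

(* causal curves: equivalence classes of causal paths *)
Definition Curve := set Path.

Definition curve_of (p : Path) : Curve := [set q | causal_path q /\ reparam p q].

Definition fd_curve (c : Curve) : Prop :=
  exists p, fd_path p /\ c = curve_of p.

Definition cprec (x y : M) : Prop :=
  x = y \/
  exists c, fd_curve c /\ exists p, c p /\ exists a b,
    a < b /\ p.1 = [set t | a <= t <= b] /\ p.2 a = x /\ p.2 b = y.

Definition spacelike (A : set M) : Prop :=
  forall x y, A x -> A y -> x <> y -> ~ cprec x y.

Definition slice (A : set M) : Prop := closed A /\ spacelike A.

Definition CAB (A B : set M) : set Curve :=
  [set c | fd_curve c /\ exists p, c p /\
     (exists q, p.1 q /\ B (p.2 q)) /\
     (forall q, p.1 q -> B (p.2 q) -> exists r, p.1 r /\ r <= q /\ A (p.2 r))].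

(* hom-sets of Slice: Slice(Z,W) = P(C[Z,W]); composition = intersection *)
Definition SliceHom (Z W : set M) : set (set Curve) :=
  [set U | U `<=` CAB Z W].

Definition wedge_obj (X Y Z : set M) : set (set Curve) :=
  [set D | D `<=` CAB Z X `&` CAB Z Y].

(* (X ∧ Y)(-) is representable: there is a slice W and a natural
   isomorphism Slice(-,W) ≅ (X ∧ Y)(-) of presheaves on Slice. *)
Definition wedge_representable (X Y : set M) : Prop :=
  exists W, slice W /\
  exists Phi : set M -> set Curve -> set Curve,
    (forall Z, slice Z ->
       (forall U, SliceHom Z W U -> wedge_obj X Y Z (Phi Z U)) /\
       (forall U U', SliceHom Z W U -> SliceHom Z W U' ->
          Phi Z U = Phi Z U' -> U = U') /\
       (forall D, wedge_obj X Y Z D -> exists U, SliceHom Z W U /\ Phi Z U = D)) /\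
    (* naturality in Z *)
    (forall Z Z', slice Z -> slice Z' ->
       forall U, SliceHom Z' Z U -> forall T, SliceHom Z W T ->
         Phi Z' (T `&` U) = Phi Z T `&` U).
End Lorentz.

From HB Require Import structures.
From mathcomp Require Import all_boot all_order all_algebra.
From mathcomp Require Import all_classical all_reals all_analysis.
From mathcomp Require Import lra.

Set Implicit Arguments.
Unset Strict Implicit.
Unset Printing Implicit Defensive.
Local Open Scope classical_set_scope.

(* By naturality, an isomorphism Slice(-, W) ~ (X /\ Y)(-) sends U : Z -> W to
   D `&` U, where D is the image of 1_W.  Surjectivity then gives
   C[Z,X] `&` C[Z,Y] `<=` C[Z,W], and injectivity (compare [set c] with set0)
   gives C[Z,W] `<=` D `<=` C[W,X] `&` C[W,Y].
   Now let x in X and y in Y be distinct with x ≺ y along a curve gamma.  Then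
   gamma is in C[X,X] `&` C[X,Y] `<=` C[X,W] `<=` C[W,X], and since gamma starts
   in X it starts in W.  As Y is spacelike x is not in Y, and as Y is closed a
   short initial segment of gamma misses Y; yet it lies in C[W,W] `<=` C[W,Y]. *)

Section CausalCurves.
Import Order.TTheory GRing.Theory Num.Theory numFieldNormedType.Exports.
Local Open Scope ring_scope.
Context {R : realType} {M : topologicalType} {n : nat} (L : LorentzData R M n).
Local Notation Path := (@Path R M).
Local Notation Curve := (@Curve R M).

Lemma fd_path_restrict (p : Path) (I : set R) :
  fd_path L p -> is_interval I -> (exists a b, I a /\ I b /\ a < b) ->
  I `<=` p.1 -> fd_path L (I, p.2).
Proof.
case: p => P f /= [ [ [_ [_ [Op [oO [PO smoothO]]]]] causal] future] intI ndI IP.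
split; [split|] => /=.
- split=> //; split=> //; exists Op; split=> //.
  by split=> // t /IP /PO.
- by move=> t /IP; apply: causal.
- by move=> t /IP; apply: future.
Qed.

Lemma smooth_path_continuous (p : Path) t :
  smooth_path L p -> p.1 t -> {for t, continuous p.2}.
Proof. by case=> _ [_ [Op [_ [pO [cO _]]]]] /pO /cO. Qed.

Lemma causal_path_curve_of (p : Path) : causal_path L p -> curve_of L p p.
Proof.
move=> cp; split=> //; exists id; split=> //; split.
- by move=> t pt; exists t.
- by split.
Qed.

Lemma fd_curve_curve_of (p : Path) : fd_path L p -> fd_curve L (curve_of L p).
Proof. by exists p. Qed.

Lemma reparam_start (p q : Path) a :
  reparam p q -> q.1 a -> (forall s, q.1 s -> a <= s) ->
  exists t0, [/\ p.1 t0, forall t, p.1 t -> t0 <= t & p.2 t0 = q.2 a].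
Proof.
case=> h [hp [hsurj [hmono hval]]] qa amin.
exists (h a); split; [exact: hp | | by rewrite hval].
move=> t /hsurj [s [qs <-]].
have := amin _ qs; rewrite le_eqVlt => /orP [/eqP <- //|].
by move=> /(hmono _ _ qa qs) /ltW.
Qed.

Lemma CAB_curve_of_hits (A B : set M) (p : Path) :
  CAB L A B (curve_of L p) -> exists t, p.1 t /\ B (p.2 t).
Proof.
case=> _ [q [[_ [h [hp [_ [_ hval]]]]] [[s [qs Bs]] _]]].
by exists (h s); split; [exact: hp | rewrite -hval].
Qed.

Lemma CAB_curve_of_start (A B : set M) (p : Path) t0 :
  p.1 t0 -> (forall t, p.1 t -> t0 <= t) -> B (p.2 t0) ->
  CAB L A B (curve_of L p) -> A (p.2 t0).
Proof.
move=> pt0 t0min Bt0 [_ [q [[_ [h [hp [hsurj [hmono hval]]]]] [_ first_A]]]].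
have [s [qs hs]] := hsurj _ pt0.
have [r [qr [rs Ar]]] : exists r, q.1 r /\ r <= s /\ A (q.2 r).
  by apply: first_A => //; rewrite hval // hs.
have r_eq_s : r = s.
  move: rs; rewrite le_eqVlt => /orP [/eqP //|/(hmono _ _ qr qs)].
  by rewrite hs ltNge t0min //; exact: hp.
by move: Ar; rewrite r_eq_s hval // hs.
Qed.

Lemma CAB_from_start (A B : set M) (c : Curve) (p : Path) a :
  fd_curve L c -> c p -> p.1 a -> (forall t, p.1 t -> a <= t) -> A (p.2 a) ->
  (exists t, p.1 t /\ B (p.2 t)) -> CAB L A B c.
Proof.
move=> fdc cp pa amin Aa hitB; split=> //; exists p; split=> //; split=> //.
by move=> t pt _; exists a; split=> //; split; [exact: amin|].
Qed.

Lemma CAB_sub_CAB_target (A B : set M) : CAB L A B `<=` CAB L B B.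
Proof.
move=> c [fdc [p [cp [hitB _]]]]; split=> //; exists p; split=> //.
by split=> // t pt Bt; exists t; split=> //; split.
Qed.

Lemma fd_path_initial_segment_avoid (p : Path) (B : set M) t0 v :
  fd_path L p -> p.1 t0 -> p.1 v -> t0 < v -> closed B -> ~ B (p.2 t0) ->
  exists t1, [/\ t0 < t1, fd_path L ([set t | t0 <= t <= t1], p.2)
               & forall t, t0 <= t <= t1 -> ~ B (p.2 t)].
Proof.
move=> fdp pt0 pv t0v cB nBt0.
have [ [ [intp _] _] _] := fdp.
have nbhsC : nbhs (p.2 t0) (~` B).
  by apply: open_nbhs_nbhs; split=> //; exact: closed_openC.
have /nbhs_ballP [e /= e0 ball_nB] :=
  smooth_path_continuous fdp.1.1 pt0 nbhsC.
pose t1 := Num.min v (t0 + e / 2).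
have t0t1 : t0 < t1 by rewrite lt_min t0v /=; lra.
have t1v : t1 <= v by rewrite ge_min lexx.
have t1e : t1 <= t0 + e / 2 by rewrite ge_min lexx orbT.
have avoid : forall t, t0 <= t <= t1 -> ~ B (p.2 t).
  move=> t /andP [t0t tt1]; apply: ball_nB.
  by rewrite -ball_normE /= ltr_distlC; apply/andP; split; lra.
exists t1; split=> //; apply: fd_path_restrict => //.
- move=> x y /andP [x1 x2] /andP [y1 y2] z /andP [z1 z2].
  by rewrite /= (le_trans x1 z1) (le_trans z2 y2).
- by exists t0, t1; rewrite /= !lexx (ltW t0t1).
- move=> t /andP [t0t tt1]; apply: (intp t0 v) => //.
  by rewrite t0t (le_trans tt1 t1v).
Qed.

Lemma CAB_self_not_sub (W B : set M) (p : Path) t0 :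
  fd_path L p -> p.1 t0 -> (forall t, p.1 t -> t0 <= t) ->
  W (p.2 t0) -> closed B -> ~ B (p.2 t0) -> ~ (CAB L W W `<=` CAB L W B).
Proof.
move=> fdp pt0 t0min Wt0 cB nBt0 WW_WB.
have [v [pv t0v]] : exists v, p.1 v /\ t0 < v.
  have [ [ [_ [ [u [v [pu [pv uv]]]] _]] _] _] := fdp.
  by exists v; split=> //; exact: le_lt_trans (t0min _ pu) uv.
have [t1 [t0t1 fd1 avoid]] := fd_path_initial_segment_avoid fdp pt0 pv t0v cB nBt0.
have t0_first : forall t, t0 <= t <= t1 -> t0 <= t by move=> t /andP [].
have t0_in : t0 <= t0 <= t1 by rewrite lexx ltW.
have : CAB L W W (curve_of L ([set t | t0 <= t <= t1], p.2)).
  apply: (CAB_from_start (fd_curve_curve_of fd1)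
    (causal_path_curve_of fd1.1) t0_in t0_first) => //.
  by exists t0.
by move=> /WW_WB /CAB_curve_of_hits [t [t_in Bt]]; exact: avoid t_in Bt.
Qed.

Lemma CAB_incl_not_cprec (A B W : set M) x y :
  slice L B -> A x -> B y -> x <> y ->
  CAB L A A `&` CAB L A B `<=` CAB L A W ->
  CAB L A W `<=` CAB L W A -> CAB L W W `<=` CAB L W B -> ~ cprec L x y.
Proof.
move=> [cB sB] Ax By xy AB_AW AW_WA WW_WB x_y.
have nBx : ~ B x by move=> Bx; exact: (sB x y Bx By xy x_y).
case: x_y => [/xy [] | [_ [[p0 [fd0 ->]] [p [p_p0 [a [b [ab [pab [pa pb]]]]]]]]]].
have pa1 : p.1 a by rewrite pab /= lexx ltW.
have pb1 : p.1 b by rewrite pab /= lexx ltW.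
have amin : forall t, p.1 t -> a <= t by move=> t; rewrite pab => /andP [].
have [t0 [p0t0 t0min]] := reparam_start p_p0.2 pa1 amin.
rewrite pa => p0x.
have gamma_AW : CAB L A W (curve_of L p0).
  apply: AB_AW; split;
    apply: (CAB_from_start (fd_curve_curve_of fd0) p_p0 pa1 amin);
    rewrite ?pa //; by [exists a; rewrite pa | exists b; rewrite pb].
have Wx : W (p0.2 t0).
  by apply: (CAB_curve_of_start p0t0 t0min _ (AW_WA _ gamma_AW)); rewrite p0x.
have nBt0 : ~ B (p0.2 t0) by rewrite p0x.
exact: (CAB_self_not_sub fd0 p0t0 t0min Wx cB nBt0 WW_WB).
Qed.

Lemma wedge_representable_CAB (X Y : set M) : wedge_representable L X Y ->
  exists W, slice L W /\ forall Z, slice L Z ->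
    CAB L Z X `&` CAB L Z Y `<=` CAB L Z W /\
    CAB L Z W `<=` CAB L W X `&` CAB L W Y.
Proof.
move=> [W [sW [Phi [bij natural]]]]; exists W; split=> //.
pose D := Phi W (CAB L W W).
have PhiE : forall Z, slice L Z -> forall U, U `<=` CAB L Z W -> Phi Z U = D `&` U.
  move=> Z sZ U UZW; have := natural W Z sW sZ U UZW (CAB L W W) (fun _ h => h).
  by rewrite setIidr //; apply: subset_trans UZW (@CAB_sub_CAB_target Z W).
have D_XY : D `<=` CAB L W X `&` CAB L W Y := (bij W sW).1 _ (fun _ h => h).
move=> Z sZ; split.
- have [U [UZW PhiU]] := (bij Z sZ).2.2 (CAB L Z X `&` CAB L Z Y) (fun _ h => h).
  by rewrite PhiE // in PhiU; rewrite -PhiU => c [_ /UZW].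
- move=> c cZW; apply: D_XY; apply: contrapT => nDc.
  have c_ZW : [set c] `<=` CAB L Z W by move=> _ ->.
  have Phi1_0 : Phi Z [set c] = Phi Z set0.
    rewrite !PhiE //; apply/seteqP; split=> d [Dd] //= dc.
    by rewrite dc in Dd.
  have := (bij Z sZ).2.1 _ _ c_ZW (sub0set _) Phi1_0.
  by move=> /seteqP [/(_ c erefl)].
Qed.

End CausalCurves.

Theorem mainTheorem10 (R : realType) (M : topologicalType) (n : nat)
  (L : LorentzData R M n) :
  is_time_oriented_lorentzian L ->
  hausdorff_space M -> @second_countable M -> connected [set: M] ->
  forall X Y : set M, slice L X -> slice L Y ->
  ~ spacelike L (X `|` Y) ->
  ~ wedge_representable L X Y.
Proof.
move=> _ _ _ _ X Y sX sY not_spacelike /wedge_representable_CAB [W [sW incl]].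
have [XXY_XW XW_WXY] := incl X sX.
have [YXY_YW YW_WXY] := incl Y sY.
have [_ WW_WXY] := incl W sW.
have XW_WX : CAB L X W `<=` CAB L W X by move=> c /XW_WXY [].
have YW_WY : CAB L Y W `<=` CAB L W Y by move=> c /YW_WXY [].
have WW_WX : CAB L W W `<=` CAB L W X by move=> c /WW_WXY [].
have WW_WY : CAB L W W `<=` CAB L W Y by move=> c /WW_WXY [].
have YYX_YW : CAB L Y Y `&` CAB L Y X `<=` CAB L Y W by rewrite setIC.
apply: not_spacelike => x y [Xx|Yx] [Xy|Yy] xy.
- exact: sX.2.
- exact: (CAB_incl_not_cprec sY Xx Yy xy XXY_XW XW_WX WW_WY).
- exact: (CAB_incl_not_cprec sX Yx Xy xy YYX_YW YW_WY WW_WX).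
- exact: sY.2.
Qed.
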